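(* Let \(k\le s\le t\) be non-negative integers, and let \(J=(j_0<\dots<j_{s-1})\) and \(K=(k_0<\dots<k_{t-1})\) be strictly increasing sequences of non-negative integers such that \(k_{t-s+p}\ge j_p\) for \(p=0,\dots,s-1\). Then \(N_k(K)\ge N_k(J)\), and the inequality is strict if \(K\ne J\).
   Context: For a strictly increasing sequence \(J=(j_0<\dots<j_{r-1})\) of non-negative integers of length \(r\ge k\), \(N_k(J)=r(r-k)+\sum_{q=0}^{r-1}(j_q-q)\). *)

From mathcomp Require Import all_boot all_order all_algebra.
Set Implicit Arguments. Unset Strict Implicit. Unset Printing Implicit Defensive.
Import GRing.Theory Num.Theory.
Local Open Scope ring_scope.

(* A strictly increasing sequence J = (j_0 < ... < j_{r-1}) of non-negative
   integers is represented by s : seq nat with sorted ltn s; r = size s.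
   N_k(J) = r(r-k) + sum_{q=0}^{r-1} (j_q - q), computed in int
   (no truncated subtraction). *)
Definition Nk (k : nat) (J : seq nat) : int :=
  let r := size J in
  (r%:Z * (r%:Z - k%:Z)) + \sum_(q < r) ((nth 0%N J q)%:Z - q%:Z).

(* Split the sum in N_k(K) at index t - s.  Then N_k(K) - N_k(J) is the sum of
   (t - s)(t - k), of the terms k_q - q for q < t - s, and of the differences
   k_{t-s+p} - j_p.  All three are non-negative: the first because k <= s <= t,
   the second because a strictly increasing sequence of naturals satisfies
   k_q >= q, the third by hypothesis.  If K <> J then either t > s, making the
   first term positive, or t = s and some k_p > j_p. *)

From mathcomp Require Import all_boot all_order all_algebra.
From mathcomp Require Import ring.
Import GRing.Theory Num.Theory.
Local Open Scope ring_scope.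

Lemma sorted_ltn_nth_geq (K : seq nat) (q : nat) :
  sorted ltn K -> (q < size K)%N -> (q <= nth 0 K q)%N.
Proof.
move=> sK; elim: q => [|q IHq] ltqK //.
apply: leq_ltn_trans (IHq (ltnW ltqK)) _.
by apply: (sorted_ltn_nth ltn_trans) => //; rewrite inE ltnW.
Qed.

Lemma Nk_subE (k : nat) (J K : seq nat) : (size J <= size K)%N ->
  Nk k K - Nk k J =
    (size K - size J)%N%:Z * ((size K)%:Z - k%:Z)
    + \sum_(q < size K - size J) ((nth 0 K q)%:Z - q%:Z)
    + \sum_(p < size J)
        ((nth 0 (drop (size K - size J) K) p)%:Z - (nth 0 J p)%:Z).
Proof.
move=> leJK; set d := (size K - size J)%N; rewrite /Nk.
have sizeKE : size K = (d + size J)%N by rewrite subnK.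
rewrite [in \sum_(q < size K) _]sizeKE big_split_ord /=.
have -> : \sum_(p < size J) ((nth 0 K (d + p))%:Z - (d + p)%N%:Z)
    = \sum_(p < size J) (((nth 0 (drop d K) p)%:Z - (nth 0 J p)%:Z)
                         + ((nth 0 J p)%:Z - p%:Z) - d%:Z).
  by apply: eq_bigr => p _; rewrite nth_drop PoszD; ring.
rewrite !big_split /= sumr_const card_ord -mulr_natr natz.
have -> : d%:Z = (size K)%:Z - (size J)%:Z by rewrite subzn.
ring.
Qed.

Lemma sum_nth_subz_ge0 (J K : seq nat) :
  (forall p, (p < size J)%N -> (nth 0 J p <= nth 0 K p)%N) ->
  0 <= \sum_(p < size J) ((nth 0 K p)%:Z - (nth 0 J p)%:Z).
Proof.
by move=> leJK; apply: sumr_ge0 => p _; rewrite subr_ge0 lez_nat leJK.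
Qed.

Lemma sum_nth_subz_gt0 (J K : seq nat) : size J = size K -> K <> J ->
  (forall p, (p < size J)%N -> (nth 0 J p <= nth 0 K p)%N) ->
  0 < \sum_(p < size J) ((nth 0 K p)%:Z - (nth 0 J p)%:Z).
Proof.
move=> eq_size neqKJ leJK.
have [p neq_p] : exists p : 'I_(size J), nth 0 J p != nth 0 K p.
  apply/existsP; apply: contra_notT neqKJ => /existsPn eqJK.
  apply: (eq_from_nth (x0 := 0%N)) => [//|q]; rewrite -eq_size => ltqJ.
  by have /negPn/eqP := eqJK (Ordinal ltqJ).
rewrite (bigD1 p) //= ltr_pwDl //.
  by rewrite subr_gt0 ltz_nat ltn_neqAle neq_p leJK.
by apply: sumr_ge0 => q _; rewrite subr_ge0 lez_nat leJK.
Qed.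

Theorem lemma4p16 (k s t : nat) (J K : seq nat) :
  (k <= s)%N -> (s <= t)%N ->
  sorted ltn J -> size J = s ->
  sorted ltn K -> size K = t ->
  (forall p : nat, (p < s)%N -> (nth 0 J p <= nth 0 K (t - s + p))%N) ->
  Nk k J <= Nk k K /\ (K <> J -> Nk k J < Nk k K).
Proof.
move=> le_ks le_st _ sizeJ sortK sizeK leJK; subst s t.
have leJdropK p : (p < size J)%N ->
    (nth 0 J p <= nth 0 (drop (size K - size J) K) p)%N.
  by rewrite nth_drop; apply: leJK.
have NkE := Nk_subE k J K le_st.
have head_ge0 : 0 <= \sum_(q < size K - size J) ((nth 0 K q)%:Z - q%:Z).
  apply: sumr_ge0 => q _; rewrite subr_ge0 lez_nat sorted_ltn_nth_geq //.
  exact: leq_trans (ltn_ord q) (leq_subr _ _).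
have tail_ge0 := sum_nth_subz_ge0 _ _ leJdropK.
have shift_ge0 : 0 <= (size K - size J)%N%:Z * ((size K)%:Z - k%:Z).
  by rewrite mulr_ge0 // subr_ge0 lez_nat (leq_trans le_ks).
split; first by rewrite -subr_ge0 NkE !addr_ge0.
move=> neqKJ; rewrite -subr_gt0 NkE.
have [lt_JK | ge_JK] := ltnP (size J) (size K).
  have shift_gt0 : 0 < (size K - size J)%N%:Z * ((size K)%:Z - k%:Z).
    by rewrite mulr_gt0 // ?subr_gt0 ?ltz_nat ?subn_gt0 // (leq_ltn_trans le_ks).
  by rewrite -addrA ltr_pwDl ?addr_ge0.
have eq_size : size J = size K by apply/eqP; rewrite eqn_leq le_st ge_JK.
rewrite -eq_size subnn drop0 in leJdropK *.
by rewrite mul0r add0r big_ord0 add0r sum_nth_subz_gt0.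
Qed.
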